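(* Let $(X_{i,j})_{1\le i\le g,\,1\le j\le n_i}$ be $\{0,1\}$-valued and suppose there is a probability measure $\nu$ on $[0,1]^g$ such that for all $0\le k_i\le n_i$, \[ P(S_1=k_1,\dots,S_g=k_g)=\binom{n_1}{k_1}\cdots\binom{n_g}{k_g}\int_{[0,1]^g}\prod_{i=1}^g\theta_i^{k_i}(1-\theta_i)^{n_i-k_i}\,d\nu(\theta_1,\dots,\theta_g), \] and every sequence with the same values of $(S_1,\dots,S_g)$ has the same probability. Then $\mathrm{Cov}_{k_1,\dots,k_g}=E_\nu\big[\prod_i(\theta_i-E_\nu\theta_i)^{k_i}\big]$ for all $0\le k_i\le n_i$; consequently $\mathrm{Cov}_{2k_1,\dots,2k_g}\ge0$ for all integers $0\le k_i\le\lfloor n_i/2\rfloor$; and, if $n_i\ge2$ for all $i$, the $g\times g$ matrix $C$ with $C_{ii}=\mathrm{Cov}$ with index $2$ in position $i$ and $0$ elsewhere, and $C_{ij}$ ($i\ne j$) $=\mathrm{Cov}$ with index $1$ in positions $i$ and $j$ and $0$ elsewhere, is positive semidefinite.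
   Context: $S_i=\sum_{j=1}^{n_i}X_{i,j}$. $w(i)=E[X_{i,1}]$ and $\mathrm{Cov}_{k_1,\dots,k_g}=E\Big[\prod_{i=1}^g\prod_{j=1}^{k_i}\big(X_{i,j}-w(i)\big)\Big]$. *)

From HB Require Import structures.
From mathcomp Require Import all_boot all_order all_algebra.
From mathcomp Require Import all_classical all_reals all_analysis.
Set Implicit Arguments. Unset Strict Implicit. Unset Printing Implicit Defensive.
Import Order.TTheory GRing.Theory Num.Theory.
Local Open Scope ring_scope.

(* Indices are 0-based: X i j (j : nat) stands for
   X_{i,j+1} of the paper. *)

Section defs.
Context {R : realType} {d : measure_display} {T : measurableType d}
  (P : probability T R) {g : nat}.

(* w(i) = E[X_{i,1}] (a finite real number since X is {0,1}-valued) *)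
Definition wmean (X : 'I_g -> nat -> {RV P >-> R}) (i : 'I_g) : R :=
  fine 'E_P[X i 0%N].

Definition Covk (X : 'I_g -> nat -> {RV P >-> R}) (k : 'I_g -> nat) : \bar R :=
  'E_P[fun t => \prod_(i < g) \prod_(j < k i) (X i j t - wmean X i)].

Definition Ssum (n : 'I_g -> nat) (X : 'I_g -> nat -> {RV P >-> R})
  (i : 'I_g) (t : T) : R := \sum_(j < n i) X i j t.
End defs.

Definition psd {R : realType} {g : nat} (M : 'M[R]_g) : Prop :=
  forall v : 'cV[R]_g, 0 <= (v^T *m M *m v) 0 0.

From HB Require Import structures.
From mathcomp Require Import all_boot all_order all_algebra.
From mathcomp Require Import all_classical all_reals all_analysis.
From mathcomp Require Import ring.
Import Order.TTheory GRing.Theory Num.Theory.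
Local Open Scope ring_scope.
Set Implicit Arguments. Unset Strict Implicit. Unset Printing Implicit Defensive.

(* Exchangeability makes all 0/1 configurations with the same row sums k
   equally likely; since there are \prod_i 'C(n_i, k_i) of them, the binomial
   mixture hypothesis yields
     P(X = c) = \int \prod_(i,j) th_i^(c_ij) (1 - th_i)^(1 - c_ij) dnu(th),
   i.e. the rows are, conditionally on th ~ nu, independent Bernoulli(th_i)
   sequences.  Integrating products of functions of the X_(i,j) against this
   mixture gives the moment formula
     E[\prod_i \prod_(j < k_i) (X_(i,j) - a_i)] = E_nu[\prod_i (th_i - a_i)^k_i];
   with k the indicator of i it identifies w(i) with E_nu th_i, and with a = w
   it is the covariance formula.  Even-index covariances are then expectations
   of squares, and the covariance matrix is the Gram matrix of the centred
   coordinates th_i - E_nu th_i, hence positive semidefinite. *)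

Lemma sum_fprod_prod (R : comPzSemiRingType) (I : finType) (T_ : I -> finType)
    (F : forall i, T_ i -> R) :
  \sum_(t : fprod T_) \prod_i F i (t i) = \prod_i \sum_(y : T_ i) F i y.
Proof.
rewrite (eq_bigr (fun t : fprod T_ => \prod_i [ffun y => F i y] (t i))); last first.
  by move=> t _; apply: eq_bigr => i _; rewrite ffunE.
rewrite big_fprod.
transitivity (\prod_i \sum_(j in tagged_with T_ i) untag 0 [ffun y => F i y] j).
  by rewrite bigA_distr_big_dep.
apply: eq_bigr => i _.
rewrite -(big_tag (fun i => fun_of_fin [ffun y : T_ i => F i y])).
by apply: eq_bigr => y _; rewrite ffunE.
Qed.

Lemma prod_mem_set (R : comPzSemiRingType) (T : finType) (A : {set T}) (a b : R) :
  \prod_j (if j \in A then a else b) = a ^+ #|A| * b ^+ (#|T| - #|A|).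
Proof.
rewrite (bigID (mem A)) /=.
rewrite (eq_bigr (fun=> a)) => [|j jA]; last by rewrite jA.
rewrite [X in _ * X](eq_bigr (fun=> b)) => [|j jA]; last by rewrite (negbTE jA).
by rewrite !prodr_const -(cardC A) addKn.
Qed.

Lemma sum_mem_set (T : finType) (A : {set T}) : (\sum_j (j \in A : nat))%N = #|A|.
Proof. by rewrite -big_mkcondr sum1_card. Qed.

Lemma prod_delta (R : comPzSemiRingType) (I : finType) (i : I) (F : I -> nat -> R) :
  (forall l, F l 0%N = 1) -> \prod_l F l (l == i : nat) = F i 1%N.
Proof.
by move=> F0; rewrite (bigD1 i) //= eqxx big1 ?mulr1 // => l /negbTE ->.
Qed.

Lemma prod_exp_cov_index (R : comPzSemiRingType) (I : finType) (h : I -> R) (i j : I) :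
  \prod_l h l ^+ (if i == j then (if l == i then 2 else 0)
                  else (if (l == i) || (l == j) then 1 else 0))%N = h i * h j.
Proof.
have [<-|ij] := eqVneq i j.
  by rewrite (bigD1 i) //= eqxx big1 ?mulr1 ?expr2 // => l /negbTE ->.
rewrite (bigD1 i) //= eqxx (bigD1 j) /= 1?eq_sym // eqxx orbT expr1 expr1.
by rewrite big1 ?mulr1 // => l /andP[/negbTE -> /negbTE ->].
Qed.

Section Configurations.
Context (g : nat) (n : 'I_g -> nat).

(* A {0,1}-array (x_(i,j))_(j < n_i) is encoded row by row as the set of
   positions of its ones. *)
Definition config := fprod (fun i : 'I_g => {set 'I_(n i)}).

Lemma card_config_sizes (k : 'I_g -> nat) :
  #|[pred c : config | [forall i, #|c i| == k i]]| = (\prod_i 'C(n i, k i))%N.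
Proof.
rewrite -sum1_card big_mkcond /=.
transitivity (\sum_(c : config) \prod_i (#|c i| == k i : nat))%N.
  apply: eq_bigr => c _; rewrite inE; case: (boolP [forall i, #|c i| == k i]) => /forallP h.
    by rewrite big1 // => i _; rewrite h.
  have [i /negbTE hi] : exists i, #|c i| != k i.
    by apply/existsP; rewrite -negb_forall; apply/forallP.
  by rewrite (bigD1 i) //= hi.
rewrite [LHS](sum_fprod_prod (fun i (A : {set 'I_(n i)}) => (#|A| == k i : nat))).
apply: eq_bigr => i _.
rewrite -[in RHS](card_ord (n i)) -card_draws -sum1_card.
by rewrite [RHS]big_mkcond; apply: eq_bigr => A _; rewrite inE.
Qed.

End Configurations.

Section Cube.
Context {R : realType} {g : nat} (nu : probability (g.-tuple R) R).

Definition cube : set (g.-tuple R) :=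
  [set th | forall i : 'I_g, 0 <= tnth th i <= 1]%classic.

Lemma measurable_cube : measurable cube.
Proof.
have -> : cube = (\bigcap_(i in [set: 'I_g]) ((fun th => tnth th i) @^-1` `[0, 1]))%classic.
  apply/seteqP; split => th /= h => [i _|i]; first by rewrite /= in_itv; exact: h.
  by have := h i I; rewrite /= in_itv.
apply: fin_bigcap_measurable => [|i _]; first exact: finite_finset.
by rewrite -[X in measurable X]setTI; apply: measurable_tnth => //; exact: measurable_itv.
Qed.

Hypothesis nu_cube : nu cube = 1%E.

Lemma integrable_bounded_on_cube (h : g.-tuple R -> R) (B : R) :
  measurable_fun setT h -> (forall th, cube th -> `|h th| <= B) ->
  nu.-integrable setT (EFin \o h).
Proof.
move=> mh hB.
have nuCcube : nu (~` cube)%classic = 0%E.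
  by rewrite probability_setC ?nu_cube ?subee //; exact: measurable_cube.
apply/(negligible_integrable _ _ _ nuCcube) => //.
- exact: measurableC measurable_cube.
- exact/measurable_realfun.measurable_EFinP.
rewrite setTD setCK; apply: measurable_bounded_integrable.
- exact: measurable_cube.
- by rewrite -ge0_fin_numE ?fin_num_measure //; exact: measurable_cube.
- exact: measurable_funS mh.
- by exists B; split; [exact: num_real | move=> M BM th /hB /le_trans; apply; exact: ltW].
Qed.

Lemma integrable_centered_mul (m : 'I_g -> R) i j :
  nu.-integrable setT
    (EFin \o (fun th => (tnth th i - m i) * (tnth th j - m j))).
Proof.
apply: (integrable_bounded_on_cube (B := (1 + `|m i|) * (1 + `|m j|))) => [|th cube_th].
  apply: measurable_realfun.measurable_funM;
    by apply: measurable_realfun.measurable_funB => //; exact: measurable_tnth.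
have centered_le l : `|tnth th l - m l| <= 1 + `|m l|.
  have /andP[th0 th1] := cube_th l.
  by apply: le_trans (ler_normB _ _) _; rewrite lerD2r ger0_norm.
by rewrite normrM ler_pM.
Qed.

End Cube.

Section Gram.
Context {R : realType} {d : measure_display} {T : measurableType d}
  (mu : {measure set T -> \bar R}).

Lemma integral_lincomb (I : finType) (a : I -> R) (h : I -> T -> R) :
  (forall i, mu.-integrable setT (EFin \o h i)) ->
  (\int[mu]_t (\sum_i a i * h i t)%:E =
   (\sum_i a i * fine (\int[mu]_t (h i t)%:E))%:E)%E.
Proof.
move=> int_h; under eq_integral do rewrite -sumEFin.
rewrite integral_sum // => [|i]; last first.
  under eq_fun do rewrite EFinM.
  by apply: integrableZl => //; exact: int_h.
rewrite -sumEFin; apply: eq_bigr => i _; under eq_integral do rewrite EFinM.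
rewrite integralZl //; last exact: int_h.
transitivity ((a i)%:E * (fine (\int[mu]_t (h i t)%:E))%:E)%E => //.
by rewrite fineK //; exact: integrable_fin_num (int_h i).
Qed.

Lemma psd_gram {g : nat} (f : 'I_g -> T -> R) :
  (forall i j, mu.-integrable setT (EFin \o (fun t => f i t * f j t))) ->
  psd (\matrix_(i, j) fine (\int[mu]_t (f i t * f j t)%:E)%E).
Proof.
move=> int_ff v.
pose a (p : 'I_g * 'I_g) := v p.1 0 * v p.2 0.
have quadE : (v^T *m \matrix_(i, j) fine (\int[mu]_t (f i t * f j t)%:E)%E *m v) 0 0 =
    \sum_p a p * fine (\int[mu]_t (f p.1 t * f p.2 t)%:E)%E.
  rewrite mxE; under eq_bigr do rewrite mxE big_distrl.
  rewrite exchange_big pair_bigA; apply: eq_bigr => -[i j] _ /=.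
  by rewrite !mxE /a /=; ring.
have squareE t : (\sum_i v i 0 * f i t) ^+ 2 = \sum_p a p * (f p.1 t * f p.2 t).
  rewrite expr2 big_distrlr pair_bigA /=; apply: eq_bigr => -[i j] _ /=.
  by rewrite /a /=; ring.
rewrite quadE -lee_fin -(@integral_lincomb _ a (fun p t => f p.1 t * f p.2 t)); last first.
  by move=> p; exact: int_ff.
under eq_integral do rewrite -squareE.
by apply: integral_ge0 => t _; rewrite lee_fin sqr_ge0.
Qed.

End Gram.

Section ConfigurationOfSample.
Context {R : realType} {d : measure_display} {T : measurableType d}
  (P : probability T R) {g : nat} (n : 'I_g -> nat) (X : 'I_g -> nat -> {RV P >-> R}).
Hypothesis X01 : forall i (j : 'I_(n i)) t, X i j t = 0 \/ X i j t = 1.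

Definition config_of (t : T) : config n := [fprod i => [set j : 'I_(n i) | X i j t == 1]].

Definition config_event (c : config n) : set T :=
  [set t | forall i (j : 'I_(n i)), X i j t = (j \in c i)%:R]%classic.

Lemma X_config_of t i (j : 'I_(n i)) : X i j t = (j \in config_of t i)%:R.
Proof.
by rewrite fprodE inE; case: (X01 j t) => ->; rewrite ?eqxx // eq_sym oner_eq0.
Qed.

Lemma config_eventP c t : config_event c t <-> config_of t = c.
Proof.
split => [Ect|<- i j]; last exact: X_config_of.
apply/fprodP => i; apply/setP => j; rewrite fprodE inE Ect.
by case: (j \in c i); rewrite ?eqxx // eq_sym oner_eq0.
Qed.

Lemma measurable_config_event c : measurable (config_event c).
Proof.
have -> : config_event c = (\bigcap_(i in [set: 'I_g]) \bigcap_(j in [set: 'I_(n i)])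
    (X i j @^-1` [set (j \in c i)%:R]))%classic.
  by apply/seteqP; split => t /= Ect => [i _ j _|i j]; [exact: Ect | exact: Ect i I j I].
apply: fin_bigcap_measurable => [|i _]; first exact: finite_finset.
apply: fin_bigcap_measurable => [|j _]; first exact: finite_finset.
by apply: measurable_funPTI; exact: measurable_set1.
Qed.

Lemma integral_config (F : config n -> R) :
  (\int[P]_t (F (config_of t))%:E = \sum_c (F c)%:E * P (config_event c))%E.
Proof.
have Fcfg t : F (config_of t) = \sum_c F c * \1_(config_event c) t.
  rewrite (bigD1 (config_of t)) //= big1 ?addr0 => [|c /negbTE cfg_c].
    by rewrite indicE mem_set ?mulr1 //; exact/config_eventP.
  by rewrite indicE memNset ?mulr0 // => /config_eventP Ec; rewrite Ec eqxx in cfg_c.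
under eq_integral do rewrite Fcfg -sumEFin.
rewrite integral_sum // => [|c]; last first.
  under eq_fun do rewrite EFinM.
  by apply: integrableZl => //; exact: integrable_indic (measurable_config_event c).
apply: eq_bigr => c _; under eq_integral do rewrite EFinM.
rewrite integralZl //; last exact: integrable_indic (measurable_config_event c).
by rewrite integral_indic ?setIT //; exact: measurable_config_event.
Qed.

Lemma Ssum_config_of t i : Ssum n X i t = #|config_of t i|%:R.
Proof.
by rewrite /Ssum -sum_mem_set natr_sum; apply: eq_bigr => j _; exact: X_config_of.
Qed.

Lemma prob_config_sizes (k : 'I_g -> nat) :
  P [set t | forall i, Ssum n X i t = (k i)%:R]%classic =
  (\sum_(c : config n | [forall i, #|c i| == k i]) P (config_event c))%E.
Proof.
set S := [set t | _]%classic.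
have mS : measurable S.
  rewrite [S](_ : _ = \bigcap_(i in [set: 'I_g]) (Ssum n X i @^-1` [set (k i)%:R]))%classic.
    apply: fin_bigcap_measurable => [|i _]; first exact: finite_finset.
    rewrite -[X in measurable X]setTI.
    have mSsum : measurable_fun setT (Ssum n X i).
      by apply: measurable_sum => j; exact: measurable_funPT.
    exact: mSsum measurableT _ (measurable_set1 _).
  by apply/seteqP; split => t /= St => [i _|i]; [exact: St | exact: St i I].
have indicS t : \1_S t = [forall i, #|config_of t i| == k i]%:R :> R.
  rewrite indicE; congr ((_ : bool)%:R).
  apply/idP/idP => [/set_mem St|/forallP h].
    by apply/forallP => i; rewrite -(eqr_nat R) -Ssum_config_of St.
  by apply/mem_set => i; rewrite Ssum_config_of; apply/eqP; rewrite eqr_nat.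
rewrite -[S]setIT -integral_indic //.
under eq_integral do rewrite indicS.
rewrite (integral_config (fun c => [forall i, #|c i| == k i]%:R)) [RHS]big_mkcond /=.
apply: eq_bigr => c _.
by case: ifP; rewrite ?mul1e ?mul0e.
Qed.

End ConfigurationOfSample.

Section BinomialMixture.
Context {R : realType} {d : measure_display} {T : measurableType d}
  (P : probability T R) {g : nat} (n : 'I_g -> nat)
  (X : 'I_g -> nat -> {RV P >-> R}) (nu : probability (g.-tuple R) R).
Hypothesis X01 : forall i (j : 'I_(n i)) t, X i j t = 0 \/ X i j t = 1.
Hypothesis nu_cube : nu cube = 1%E.
Hypothesis mixture : forall k : 'I_g -> nat, (forall i, (k i <= n i)%N) ->
  P [set t | forall i : 'I_g, Ssum n X i t = (k i)%:R]%classic =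
  ((\prod_(i < g) ('C(n i, k i))%:R)%:E *
   \int[nu]_th (\prod_(i < g) (tnth th i ^+ k i * (1 - tnth th i) ^+ (n i - k i)))%:E)%E.
Hypothesis exchangeable : forall x y : forall i : 'I_g, 'I_(n i) -> bool,
  (forall i, (\sum_(j < n i) (x i j : nat) = \sum_(j < n i) (y i j : nat))%N) ->
  P [set t | forall (i : 'I_g) (j : 'I_(n i)), X i j t = (x i j)%:R]%classic =
  P [set t | forall (i : 'I_g) (j : 'I_(n i)), X i j t = (y i j)%:R]%classic.

Definition config_weight (c : config n) (th : g.-tuple R) : R :=
  \prod_i \prod_(j : 'I_(n i)) (if j \in c i then tnth th i else 1 - tnth th i).

Lemma config_weightE c th : config_weight c th =
  \prod_i (tnth th i ^+ #|c i| * (1 - tnth th i) ^+ (n i - #|c i|)).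
Proof. by apply: eq_bigr => i _; rewrite prod_mem_set card_ord. Qed.

Lemma integrable_config_weight c : nu.-integrable setT (EFin \o config_weight c).
Proof.
apply: (integrable_bounded_on_cube nu_cube (B := 1)) => [|th cube_th].
  apply: measurable_prod => i _; apply: measurable_prod => j _.
  case: (j \in c i); first exact: measurable_tnth.
  by apply: measurable_realfun.measurable_funB => //; exact: measurable_tnth.
have factor01 i (j : 'I_(n i)) :
    0 <= (if j \in c i then tnth th i else 1 - tnth th i) <= 1.
  have /andP[th0 th1] := cube_th i.
  case: (j \in c i); first by rewrite th0 th1.
  by rewrite subr_ge0 th1 gerBl.
have row01 i :
    0 <= \prod_(j : 'I_(n i)) (if j \in c i then tnth th i else 1 - tnth th i) <= 1.
  by rewrite prodr_ge0 ?prodr_ile1 // => j _; have /andP[] := factor01 i j.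
by rewrite ger0_norm ?prodr_ile1 ?prodr_ge0 // => i _; have /andP[] := row01 i.
Qed.

Lemma prob_config_event c :
  P (config_event X c) = (\int[nu]_th (config_weight c th)%:E)%E.
Proof.
pose k i := #|c i|.
have k_le_n i : (k i <= n i)%N by rewrite -[n i]card_ord max_card.
have fin_c := fin_num_measure P _ (measurable_config_event X c).
have := mixture k_le_n; rewrite (prob_config_sizes X01).
rewrite (eq_bigr (fun=> P (config_event X c))) => [|c' /forallP same]; last first.
  by apply: exchangeable => i; rewrite !sum_mem_set; exact/eqP/same.
have N_neq0 : (\prod_i 'C(n i, k i))%:R != 0 :> R.
  by rewrite pnatr_eq0 -lt0n prodn_gt0 // => i; rewrite bin_gt0.
have fin_w := integrable_fin_num measurableT (integrable_config_weight c).
rewrite (eq_integral (fun th => (config_weight c th)%:E)) => [|th _]; last first.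
  by rewrite config_weightE.
rewrite -(fineK fin_c) -(fineK fin_w) sumEFin sumr_const card_config_sizes.
rewrite -natr_prod -EFinM -(mulr_natl (fine (P (config_event X c)))).
by move=> [eqN]; congr EFin; exact: (mulfI N_neq0).
Qed.

Lemma integral_prod_config (G : forall i, 'I_(n i) -> bool -> R) :
  (\int[P]_t (\prod_i \prod_(j : 'I_(n i)) G i j (j \in config_of n X t i))%:E =
   \int[nu]_th (\prod_i \prod_(j : 'I_(n i))
      (tnth th i * G i j true + (1 - tnth th i) * G i j false))%:E)%E.
Proof.
pose F (c : config n) := \prod_i \prod_(j : 'I_(n i)) G i j (j \in c i).
rewrite (integral_config X01 F).
under eq_bigr => c _.
  rewrite prob_config_event -integralZl //; last exact: integrable_config_weight.
  over.
rewrite -integral_sum // => [|c]; last first.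
  by apply: integrableZl => //; exact: integrable_config_weight.
apply: eq_integral => th _; rewrite sumEFin; congr EFin.
transitivity (\sum_(c : config n) \prod_i \prod_(j : 'I_(n i))
    (G i j (j \in c i) * (if j \in c i then tnth th i else 1 - tnth th i))).
  by apply: eq_bigr => c _; rewrite -big_split; apply: eq_bigr => i _; rewrite -big_split.
rewrite (sum_fprod_prod (fun i (A : {set 'I_(n i)}) =>
  \prod_(j : 'I_(n i)) (G i j (j \in A) * (if j \in A then tnth th i else 1 - tnth th i)))).
apply: eq_bigr => i _; rewrite bigA_distr; apply: eq_bigr => A _.
by apply: eq_bigr => j _; case: (j \in A); rewrite mulrC.
Qed.

Lemma integral_moment (k : 'I_g -> nat) (a : 'I_g -> R) : (forall i, (k i <= n i)%N) ->
  (\int[P]_t (\prod_i \prod_(j < k i) (X i j t - a i))%:E =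
   \int[nu]_th (\prod_i (tnth th i - a i) ^+ k i)%:E)%E.
Proof.
move=> k_le_n.
pose G i (j : 'I_(n i)) (b : bool) := if (j < k i)%N then b%:R - a i else 1.
have widen i (F : nat -> R) :
    \prod_(j < k i) F j = \prod_(j < n i) (if (j < k i)%N then F j else 1).
  by rewrite (big_ord_widen _ _ (k_le_n i)) big_mkcond.
transitivity (\int[P]_t (\prod_i \prod_(j : 'I_(n i)) G i j (j \in config_of n X t i))%:E)%E.
  apply: eq_integral => t _; congr EFin; apply: eq_bigr => i _.
  rewrite (widen i (fun j => X i j t - a i)).
  by apply: eq_bigr => j _; rewrite /G -X_config_of.
rewrite integral_prod_config; apply: eq_integral => th _; congr EFin.
apply: eq_bigr => i _.
rewrite -[k i]subn0 -prodr_const_nat big_mkord (widen i (fun=> tnth th i - a i)).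
by apply: eq_bigr => j _; rewrite /G; case: ifP => _ /=; ring.
Qed.

Lemma mean_mixture i : (0 < n i)%N -> wmean X i = fine 'E_nu[fun th => tnth th i].
Proof.
move=> n_gt0; rewrite /wmean !expectation.unlock; congr fine.
have delta_le_n l : ((l == i : nat) <= n l)%N by case: eqP => // ->.
rewrite (eq_integral (fun t => (\prod_l \prod_(j < (l == i : nat)) (X l j t - 0))%:E)).
  rewrite integral_moment //; apply: eq_integral => th _.
  by rewrite (prod_delta (F := fun l m => (tnth th l - 0) ^+ m) i) // subr0 expr1.
move=> t _; rewrite (prod_delta (F := fun l m => \prod_(j < m) (X l j t - 0)) i).
  by rewrite big_ord1 subr0.
by move=> l; exact: big_ord0.
Qed.

Lemma Covk_mixture k : (forall i, (k i <= n i)%N) ->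
  Covk X k = 'E_nu[fun th =>
    (\prod_i (tnth th i - fine 'E_nu[fun th' => tnth th' i]) ^+ k i)%R]%E.
Proof.
move=> k_le_n; rewrite /Covk !expectation.unlock integral_moment //.
apply: eq_integral => th _; congr EFin; apply: eq_bigr => i _.
have [->|k_gt0] := posnP (k i); first by rewrite !expr0.
by rewrite mean_mixture ?expectation.unlock //; exact: leq_trans k_gt0 (k_le_n i).
Qed.

End BinomialMixture.

Unset Implicit Arguments.

Theorem mainTheorem6 (R : realType) (d : measure_display) (T : measurableType d)
  (P : probability T R) (g : nat) (n : 'I_g -> nat)
  (X : 'I_g -> nat -> {RV P >-> R})
  (nu : probability (g.-tuple R) R) :
  (forall (i : 'I_g) (j : 'I_(n i)) (t : T), X i j t = 0 \/ X i j t = 1) ->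
  nu [set th : g.-tuple R | forall i : 'I_g, 0 <= tnth th i <= 1]%classic = 1%E ->
  (forall k : 'I_g -> nat, (forall i, (k i <= n i)%N) ->
     P [set t | forall i : 'I_g, Ssum n X i t = (k i)%:R]%classic =
     ((\prod_(i < g) ('C(n i, k i))%:R)%:E *
      \int[nu]_th (\prod_(i < g) (tnth th i ^+ k i * (1 - tnth th i) ^+ (n i - k i)))%:E)%E) ->
  (forall x y : forall i : 'I_g, 'I_(n i) -> bool,
     (forall i, (\sum_(j < n i) (x i j : nat) = \sum_(j < n i) (y i j : nat))%N) ->
     P [set t | forall (i : 'I_g) (j : 'I_(n i)), X i j t = (x i j)%:R]%classic =
     P [set t | forall (i : 'I_g) (j : 'I_(n i)), X i j t = (y i j)%:R]%classic) ->
  [/\ (forall k : 'I_g -> nat, (forall i, (k i <= n i)%N) ->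
         Covk X k =
         ('E_nu[fun th =>
            (\prod_(i < g) (tnth th i - fine 'E_nu[fun th' => tnth th' i]) ^+ k i)%R])%E),
      (forall k : 'I_g -> nat, (forall i, (k i <= (n i)./2)%N) ->
         (0 <= Covk X (fun i => (2 * k i)%N))%E)
    & ((forall i, (2 <= n i)%N) ->
         psd (\matrix_(i < g, j < g)
                fine (Covk X (fun l : 'I_g =>
                        if i == j then (if l == i then 2%N else 0%N)
                        else (if (l == i) || (l == j) then 1%N else 0%N)))))].
Proof.
move=> X01 nu_cube mixture exchangeable.
have cov := Covk_mixture X01 nu_cube mixture exchangeable.
split => [//|k k_le|n_ge2].
  rewrite cov => [|i]; last by rewrite mul2n -geq_half_double.
  rewrite expectation.unlock; apply: integral_ge0 => th _; rewrite lee_fin.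
  by apply: prodr_ge0 => i _; rewrite exprM exprn_ge0 ?sqr_ge0.
pose m i := fine 'E_nu[fun th => tnth th i].
set C := \matrix_(i, j) _.
have -> : C = \matrix_(i < g, j < g)
    fine ('E_nu[fun th => ((tnth th i - m i) * (tnth th j - m j))%R])%E.
  apply/matrixP => i j; rewrite !mxE cov => [|l]; last first.
    by apply: leq_trans (n_ge2 l); case: eqP; case: eqP => //; case: eqP.
  by congr (fine 'E_nu[_]); apply/funext => th; exact: prod_exp_cov_index.
rewrite expectation.unlock; apply: psd_gram => i j; exact: integrable_centered_mul.
Qed.
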